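(* Fix $0<d<1$ and let $c(x)=x^d$. For common slot instances, in every game under the coordination mechanism described in the context, for every optimal assignment $s^*$ there exists a payment vector $\xi$ such that $(s^*,\xi)$ is a Nash equilibrium.
   Context: A game consists of a cost function $c$ (here $c(x)=x^d$, $c(0)=0$), slots $t=1,\dots,T$, and a set of jobs, each job $j$ having integer release time $r_j$ and deadline $d_j$ with $0<r_j<d_j<T$. A common slot instance is one in which some slot lies in $[r_j,d_j)$ for every job $j$. An assignment $s$ gives each job a slot $s_j$ with $r_j\le s_j<d_j$; the load is $l_t(s)=|\{j:s_j=t\}|$ and $C(s)=\sum_{t=1}^T c(l_t(s))$; an optimal assignment minimizes $C$. In the coordination mechanism, each job $j$ chooses a pair $(s_j,\xi_j)$ with $s_j\in[r_j,d_j)$ and payment $\xi_j\ge0$. Slot $t$ is opened iff $\sum_{j:s_j=t}\xi_j\ge c(l_t(s))$; a job whose slot is not opened has infinite cost, otherwise its cost is $\xi_j$. A profile $(s,\xi)$ is a Nash equilibrium if for every job $j$: (i) $\sum_{j':s_{j'}=s_j}\xi_{j'}\ge c(l_{s_j}(s))$; (ii) for every $t\in[r_j,d_j)\setminus\{s_j\}$, $\xi_j\le\max\{0,\,c(l_t(s)+1)-\sum_{j':s_{j'}=t}\xi_{j'}\}$; (iii) $\xi_j\le\max\{0,\,c(l_{s_j}(s))-\sum_{j':s_{j'}=s_j,\,j'\ne j}\xi_{j'}\}$. *)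

From Stdlib Require Import Reals Lra Lia Arith List.
Import ListNotations.
Open Scope R_scope.

(* Jobs are 0..n-1; job j has release time r j and deadline dl j.
   Slots are 1..T.  An assignment / payment is a function on job indices
   (values at indices >= n are irrelevant). *)

Definition cost (d : R) (x : nat) : R :=
  match x with O => 0 | S _ => Rpower (INR x) d end.

Definition jobs (n : nat) : list nat := seq 0 n.

Definition load (n : nat) (s : nat -> nat) (t : nat) : nat :=
  length (filter (fun j => Nat.eqb (s j) t) (jobs n)).

Definition paysum (n : nat) (s : nat -> nat) (xi : nat -> R) (t : nat) : R :=
  fold_right (fun j acc => (if Nat.eqb (s j) t then xi j else 0) + acc) 0 (jobs n).

Definition paysum_others (n : nat) (s : nat -> nat) (xi : nat -> R) (t j : nat) : R :=
  fold_right (fun j' acc => (if andb (Nat.eqb (s j') t) (negb (Nat.eqb j' j))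
                             then xi j' else 0) + acc) 0 (jobs n).

Definition total_cost (d : R) (n T : nat) (s : nat -> nat) : R :=
  fold_right (fun t acc => cost d (load n s t) + acc) 0 (seq 1 T).

Definition valid_instance (n T : nat) (r dl : nat -> nat) : Prop :=
  forall j, (j < n)%nat -> (0 < r j /\ r j < dl j /\ dl j < T)%nat.

Definition common_slot (n : nat) (r dl : nat -> nat) : Prop :=
  exists t, forall j, (j < n)%nat -> (r j <= t < dl j)%nat.

Definition feasible (n : nat) (r dl : nat -> nat) (s : nat -> nat) : Prop :=
  forall j, (j < n)%nat -> (r j <= s j < dl j)%nat.

Definition optimal (d : R) (n T : nat) (r dl : nat -> nat) (s : nat -> nat) : Prop :=
  feasible n r dl s /\
  forall s', feasible n r dl s' -> total_cost d n T s <= total_cost d n T s'.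

Definition nash (d : R) (n : nat) (r dl : nat -> nat) (s : nat -> nat) (xi : nat -> R) : Prop :=
  forall j, (j < n)%nat ->
    0 <= xi j /\
    paysum n s xi (s j) >= cost d (load n s (s j)) /\
    (forall t, (r j <= t < dl j)%nat -> t <> s j ->
       xi j <= Rmax 0 (cost d (load n s t + 1) - paysum n s xi t)) /\
    xi j <= Rmax 0 (cost d (load n s (s j)) - paysum_others n s xi (s j) j).

(** Since [0 < d < 1], a slot holding [0 < x <= n] jobs costs
    [x^d = x * x^(d-1) >= x * n^(d-1)], strictly more when [x < n].  Summing over
    the slots, every assignment of the [n] jobs costs at least [n * n^(d-1) = n^d],
    the cost of putting all jobs in the common slot, with equality only if some
    slot holds all [n] jobs.  So an optimal assignment uses a single slot, and
    there the fair share [n^(d-1)] is an equilibrium payment: together the jobs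
    pay exactly [n^d], and leaving for an empty slot would cost [c(1) = 1]. *)

From Stdlib Require Import Reals Lra Lia List.
Open Scope R_scope.

Definition sumR (f : nat -> R) (L : list nat) : R :=
  fold_right (fun t acc => f t + acc) 0 L.

Lemma sumR_ext f g L :
  (forall t, In t L -> f t = g t) -> sumR f L = sumR g L.
Proof.
  induction L as [|x L IH]; simpl; intros H; auto.
  rewrite H, IH; auto.
Qed.

Lemma sumR_0 f L : (forall t, In t L -> f t = 0) -> sumR f L = 0.
Proof.
  induction L as [|x L IH]; simpl; intros H; auto.
  rewrite H, IH; auto; lra.
Qed.

Lemma sumR_add f g L : sumR (fun t => f t + g t) L = sumR f L + sumR g L.
Proof. induction L; simpl; lra. Qed.

Lemma sumR_scal a f L : sumR (fun t => a * f t) L = a * sumR f L.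
Proof. induction L; simpl; [|rewrite IHL]; lra. Qed.

Lemma sumR_1 L : sumR (fun _ => 1) L = INR (length L).
Proof. induction L; simpl length; [|rewrite S_INR]; simpl; lra. Qed.

Lemma sumR_le f g L : (forall t, In t L -> f t <= g t) -> sumR f L <= sumR g L.
Proof.
  induction L as [|x L IH]; simpl; intros H; [lra|].
  assert (f x <= g x) by auto.
  assert (sumR f L <= sumR g L) by auto.
  lra.
Qed.

Lemma sumR_lt f g L :
  (forall t, In t L -> f t <= g t) -> (exists t, In t L /\ f t < g t) ->
  sumR f L < sumR g L.
Proof.
  induction L as [|x L IH]; simpl; intros Hle [t [Ht Hlt]]; [contradiction|].
  destruct Ht as [<-|Ht].
  - assert (sumR f L <= sumR g L) by (apply sumR_le; auto). lra.
  - assert (f x <= g x) by auto.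
    assert (sumR f L < sumR g L) by (apply IH; eauto). lra.
Qed.

Lemma sumR_comm (f : nat -> nat -> R) L J :
  sumR (fun t => sumR (fun j => f j t) J) L = sumR (fun j => sumR (f j) L) J.
Proof.
  induction L as [|t L IH]; simpl.
  - symmetry. apply sumR_0. auto.
  - rewrite IH, <- sumR_add. reflexivity.
Qed.

Lemma sumR_single x v L :
  NoDup L -> In x L -> sumR (fun t => if Nat.eqb x t then v else 0) L = v.
Proof.
  induction L as [|y L IH]; simpl; intros Hnd Hx; [contradiction|].
  inversion Hnd as [|? ? Hy Hnd']; subst.
  destruct (Nat.eqb_spec x y) as [<-|Hxy].
  - rewrite sumR_0; [lra|].
    intros t Ht. destruct (Nat.eqb_spec x t); congruence.
  - destruct Hx as [Hx|Hx]; [congruence|]. rewrite IH; auto. lra.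
Qed.

Lemma INR_length_filter (f : nat -> bool) L :
  INR (length (filter f L)) = sumR (fun x => if f x then 1 else 0) L.
Proof.
  induction L as [|x L IH]; simpl; auto.
  destruct (f x); simpl length; [rewrite S_INR|]; lra.
Qed.

Section Loads.

Variables (n : nat) (s : nat -> nat).

Lemma INR_load t :
  INR (load n s t) = sumR (fun j => if Nat.eqb (s j) t then 1 else 0) (jobs n).
Proof. apply INR_length_filter. Qed.

Lemma load_le t : (load n s t <= n)%nat.
Proof.
  unfold load, jobs. rewrite <- (length_seq n 0) at 2. apply filter_length_le.
Qed.

Lemma load_pos j : (j < n)%nat -> (0 < load n s (s j))%nat.
Proof.
  intros Hj. unfold load.
  assert (Hin : In j (filter (fun k => Nat.eqb (s k) (s j)) (jobs n))).
  { apply filter_In. split; [apply in_seq; lia | apply Nat.eqb_refl]. }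
  destruct (filter _ _); [contradiction | simpl; lia].
Qed.

Lemma load_full t j : load n s t = n -> (j < n)%nat -> s j = t.
Proof.
  intros Hfull Hj. apply Nat.eqb_eq.
  assert (Hall := filter_length_forallb (fun k => Nat.eqb (s k) t) (jobs n)).
  unfold jobs in Hall. rewrite length_seq in Hall.
  apply (proj1 (forallb_forall _ _) (Hall Hfull)), in_seq. lia.
Qed.

Lemma sum_loads L :
  NoDup L -> (forall j, (j < n)%nat -> In (s j) L) ->
  sumR (fun t => INR (load n s t)) L = INR n.
Proof.
  intros Hnd Hin.
  rewrite (sumR_ext _ _ _ (fun t _ => INR_load t)), sumR_comm.
  rewrite (sumR_ext _ (fun _ => 1)), sumR_1.
  - unfold jobs. now rewrite length_seq.
  - intros j Hj. apply in_seq in Hj. apply sumR_single; auto with arith.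
    apply Hin. lia.
Qed.

Lemma paysum_const c t : paysum n s (fun _ => c) t = c * INR (load n s t).
Proof.
  rewrite INR_load, <- sumR_scal.
  apply sumR_ext. intros j _. destruct (Nat.eqb (s j) t); lra.
Qed.

Lemma paysum_others_eq xi j :
  (j < n)%nat -> paysum_others n s xi (s j) j = paysum n s xi (s j) - xi j.
Proof.
  intros Hj.
  change (paysum_others n s xi (s j) j) with
    (sumR (fun k => if (Nat.eqb (s k) (s j) && negb (Nat.eqb k j))%bool
                    then xi k else 0) (jobs n)).
  change (paysum n s xi (s j)) with
    (sumR (fun k => if Nat.eqb (s k) (s j) then xi k else 0) (jobs n)).
  rewrite <- (sumR_single j (xi j) (jobs n)) by (apply seq_NoDup || (apply in_seq; lia)).
  apply Rplus_eq_reg_r with (sumR (fun k => if Nat.eqb j k then xi j else 0) (jobs n)).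
  rewrite <- sumR_add. unfold Rminus. rewrite Rplus_assoc, Rplus_opp_l, Rplus_0_r.
  apply sumR_ext. intros k _.
  destruct (Nat.eqb_spec j k) as [<-|Hjk].
  - rewrite !Nat.eqb_refl. simpl. lra.
  - replace (Nat.eqb k j) with false by (symmetry; apply Nat.eqb_neq; auto).
    rewrite Bool.andb_true_r. lra.
Qed.

Lemma load_single_slot u t :
  (forall j, (j < n)%nat -> s j = u) -> load n s t = if Nat.eqb u t then n else 0%nat.
Proof.
  intros Hu. unfold load.
  assert (Hjobs : forall j, In j (jobs n) -> s j = u)
    by (intros j Hj; apply in_seq in Hj; apply Hu; lia).
  destruct (Nat.eqb_spec u t) as [<-|Hut].
  - rewrite (filter_ext_in _ (fun _ => true)), filter_true.
    + apply length_seq.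
    + intros j Hj. rewrite Hjobs; auto. apply Nat.eqb_refl.
  - rewrite (filter_ext_in _ (fun _ => false)), filter_false; auto.
    intros j Hj. rewrite Hjobs; auto. apply Nat.eqb_neq; auto.
Qed.

End Loads.

Definition fair_share (d : R) (n : nat) : R := Rpower (INR n) (d - 1).

Lemma fair_share_ge0 d n : 0 <= fair_share d n.
Proof. left. apply exp_pos. Qed.

Lemma Rpower_le_base_nonpos x y e :
  e <= 0 -> 0 < x <= y -> Rpower y e <= Rpower x e.
Proof.
  intros He Hxy. replace e with (- - e) by ring. rewrite (Rpower_Ropp x), (Rpower_Ropp y).
  apply Rinv_le_contravar; [apply exp_pos | apply Rle_Rpower_l; lra].
Qed.

Lemma Rpower_lt_base_neg x y e :
  e < 0 -> 0 < x < y -> Rpower y e < Rpower x e.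
Proof.
  intros He Hxy. replace e with (- - e) by ring. rewrite (Rpower_Ropp x), (Rpower_Ropp y).
  apply Rinv_0_lt_contravar; [apply exp_pos | apply Rlt_Rpower_l; lra].
Qed.

Lemma cost_fair_share d x : (0 < x)%nat -> cost d x = INR x * fair_share d x.
Proof.
  intros Hx. destruct x as [|x]; [lia|]. unfold cost, fair_share.
  replace d with (1 + (d - 1)) at 1 by ring.
  rewrite Rpower_plus, Rpower_1; auto. apply lt_0_INR. lia.
Qed.

Lemma fair_share_1 d : fair_share d 1 = 1.
Proof. unfold fair_share, Rpower. simpl. rewrite ln_1, Rmult_0_r. apply exp_0. Qed.

Lemma cost_1 d : cost d 1 = 1.
Proof. rewrite cost_fair_share, fair_share_1; simpl; lra || lia. Qed.

Lemma fair_share_le_1 d n : d <= 1 -> (0 < n)%nat -> fair_share d n <= 1.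
Proof.
  intros Hd Hn. rewrite <- (fair_share_1 d).
  apply Rpower_le_base_nonpos; [lra|]. split; [simpl; lra | apply le_INR; lia].
Qed.

Lemma cost_ge_linear d x n :
  d <= 1 -> (x <= n)%nat -> INR x * fair_share d n <= cost d x.
Proof.
  intros Hd Hxn. destruct (Nat.eq_dec x 0) as [->|Hx]; [simpl; lra|].
  rewrite cost_fair_share by lia.
  apply Rmult_le_compat_l; [apply pos_INR|].
  apply Rpower_le_base_nonpos; [lra|]. split; [apply lt_0_INR | apply le_INR]; lia.
Qed.

Lemma cost_gt_linear d x n :
  d < 1 -> (0 < x < n)%nat -> INR x * fair_share d n < cost d x.
Proof.
  intros Hd Hxn. rewrite cost_fair_share by lia.
  apply Rmult_lt_compat_l; [apply lt_0_INR; lia|].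
  apply Rpower_lt_base_neg; [lra|]. split; apply lt_0_INR || apply lt_INR; lia.
Qed.

Section TotalCost.

Variables (d : R) (n T : nat) (s : nat -> nat).

Lemma total_cost_gt_of_split j :
  d < 1 -> (forall k, (k < n)%nat -> In (s k) (seq 1 T)) ->
  (j < n)%nat -> load n s (s j) <> n -> cost d n < total_cost d n T s.
Proof.
  intros Hd Hslots Hj Hsplit.
  change (total_cost d n T s) with (sumR (fun t => cost d (load n s t)) (seq 1 T)).
  rewrite (cost_fair_share d n), Rmult_comm by lia.
  rewrite <- (sum_loads n s (seq 1 T)), <- sumR_scal by (apply seq_NoDup || exact Hslots).
  apply sumR_lt.
  - intros t _. rewrite Rmult_comm. apply cost_ge_linear; [lra | apply load_le].
  - exists (s j). split; auto.
    rewrite Rmult_comm. apply cost_gt_linear; auto.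
    pose proof (load_pos n s j Hj). pose proof (load_le n s (s j)). lia.
Qed.

Lemma total_cost_single_slot u :
  (forall j, (j < n)%nat -> s j = u) -> In u (seq 1 T) -> total_cost d n T s = cost d n.
Proof.
  intros Hu HuT.
  change (total_cost d n T s) with (sumR (fun t => cost d (load n s t)) (seq 1 T)).
  rewrite <- (sumR_single u (cost d n) (seq 1 T)) by (apply seq_NoDup || exact HuT).
  apply sumR_ext. intros t _.
  rewrite (load_single_slot n s u t Hu). now destruct (Nat.eqb u t).
Qed.

End TotalCost.

Lemma feasible_in_slots n T r dl s j :
  valid_instance n T r dl -> feasible n r dl s -> (j < n)%nat -> In (s j) (seq 1 T).
Proof.
  intros Hvalid Hfeas Hj. apply in_seq.
  specialize (Hvalid j Hj). specialize (Hfeas j Hj). lia.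
Qed.

Lemma optimal_single_slot d n T r dl s :
  0 < d < 1 -> valid_instance n T r dl -> common_slot n r dl ->
  optimal d n T r dl s -> exists u, forall j, (j < n)%nat -> s j = u.
Proof.
  intros Hd Hvalid [t0 Ht0] [Hfeas Hopt].
  destruct n as [|n']; [exists 0%nat; lia|].
  set (n := S n') in *.
  assert (Hfeas0 : feasible n r dl (fun _ => t0)) by exact Ht0.
  assert (Hcommon : total_cost d n T (fun _ => t0) = cost d n).
  { apply total_cost_single_slot with t0; auto.
    apply (feasible_in_slots n T r dl (fun _ => t0) 0); auto. lia. }
  assert (Hfull : load n s (s 0%nat) = n).
  { destruct (Nat.eq_dec (load n s (s 0%nat)) n) as [|Hsplit]; auto.
    pose proof (Hopt _ Hfeas0).
    assert (cost d n < total_cost d n T s).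
    { apply (total_cost_gt_of_split d n T s 0); try lra || lia.
      intros j Hj. now apply (feasible_in_slots n T r dl). }
    lra. }
  exists (s 0%nat). intros j Hj. now apply (load_full n s).
Qed.

Lemma nash_fair_share d n r dl s u :
  d <= 1 -> (forall j, (j < n)%nat -> s j = u) ->
  nash d n r dl s (fun _ => fair_share d n).
Proof.
  intros Hd Hu j Hj. rewrite (Hu j Hj).
  assert (Hload : forall t, load n s t = if Nat.eqb u t then n else 0%nat)
    by (intro; apply load_single_slot; auto).
  assert (Hn : cost d n = INR n * fair_share d n) by (apply cost_fair_share; lia).
  pose proof (fair_share_ge0 d n).
  pose proof (fair_share_le_1 d n Hd ltac:(lia)).
  split; [|split; [|split]].
  - assumption.
  - rewrite paysum_const, Hload, Nat.eqb_refl. lra.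
  - intros t _ Hneq. rewrite paysum_const, Hload.
    replace (Nat.eqb u t) with false by (symmetry; apply Nat.eqb_neq; auto).
    rewrite Rmult_0_r, Rminus_0_r, cost_1. eapply Rle_trans; [|apply Rmax_r]. lra.
  - rewrite <- (Hu j Hj), paysum_others_eq, paysum_const by auto.
    rewrite (Hu j Hj), Hload, Nat.eqb_refl.
    eapply Rle_trans; [|apply Rmax_r]. lra.
Qed.

Theorem theorem6 :
  forall (d : R), 0 < d < 1 ->
  forall (n T : nat) (r dl : nat -> nat),
    valid_instance n T r dl ->
    common_slot n r dl ->
    forall s : nat -> nat, optimal d n T r dl s ->
    exists xi : nat -> R, nash d n r dl s xi.
Proof.
  intros d Hd n T r dl Hvalid Hcommon s Hopt.
  destruct (optimal_single_slot d n T r dl s Hd Hvalid Hcommon Hopt) as [u Hu].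
  exists (fun _ => fair_share d n).
  apply nash_fair_share with u; [lra | exact Hu].
Qed.
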